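(* Let $M$ be a finite matroid and let $d$ be the size of its largest circuit. Then $\mathrm{bd}(M)\ge\log_2 d$.
   Context: For a rooted tree $T$, $\|T\|$ is its number of edges and its depth is the number of edges of a longest root-to-leaf path. A depth-decomposition of a finite matroid $M$ (rank function $r$) is a pair $(T,f)$ with $T$ a rooted tree and $f:M\to V(T)$ such that (1) $r(M)=\|T\|$ and (2) $r(X)\le\|T^*(X)\|$ for every $X\subseteq M$, where $T^*(X)$ is the union of the paths from the root to all vertices of $f(X)$. The branch-depth $\mathrm{bd}(M)$ is the minimum depth of $T$ over all depth-decompositions $(T,f)$ of $M$. *)

From HB Require Import structures.
From mathcomp Require Import all_boot.
Set Implicit Arguments. Unset Strict Implicit. Unset Printing Implicit Defensive.

Record matroid (E : finType) := Matroid {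
  mrank : {set E} -> nat;
  mrank_card : forall X : {set E}, mrank X <= #|X|;
  mrank_mono : forall X Y : {set E}, X \subset Y -> mrank X <= mrank Y;
  mrank_submod : forall X Y : {set E},
      mrank (X :|: Y) + mrank (X :&: Y) <= mrank X + mrank Y
}.

Section MatroidDefs.
Variables (E : finType) (M : matroid E).

Definition indep (X : {set E}) : bool := mrank M X == #|X|.

Definition circuit (C : {set E}) : bool :=
  ~~ indep C && [forall X : {set E}, (X \proper C) ==> indep X].

(* size of a largest circuit (0 if there is no circuit) *)
Definition max_circuit_size : nat :=
  \max_(C : {set E} | circuit C) #|C|.
End MatroidDefs.

(* Rooted trees: a finite vertex type V, a root, and a parent map; the
   edges are {v, par v} for v <> root. *)
Section Trees.
Variables (V : finType) (root : V) (par : V -> V).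

Definition is_rooted_tree : Prop :=
  par root = root /\ forall v : V, exists n, iter n par v = root.

Definition anc (v : V) : {set V} :=
  [set u | [exists n : 'I_#|V|, iter n par v == u]].

Definition tree_size : nat := #|V| - 1.

(* ||T^*(A)|| for a set A of vertices: edges of the union of the root-paths
   to vertices of A; each such edge is identified with its lower endpoint,
   a non-root vertex. *)
Definition subtree_size (A : {set V}) : nat :=
  #|(\bigcup_(a in A) anc a) :\ root|.

Definition tree_depth : nat := \max_(v : V) #|anc v :\ root|.
End Trees.

Definition depth_decomposition (E : finType) (M : matroid E)
    (V : finType) (root : V) (par : V -> V) (f : E -> V) : Prop :=
  [/\ is_rooted_tree root par,
      mrank M [set: E] = tree_size V
    & forall X : {set E}, mrank M X <= subtree_size root par (f @: X)].

From mathcomp Require Import all_boot zify.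
Set Implicit Arguments. Unset Strict Implicit. Unset Printing Implicit Defensive.

(* Restricting the decomposition to a circuit C leaves a set w of |C| - 1
   tree edges (non-root vertices) such that every X ⊆ C has rank at most
   the number of edges of w on the root paths of f(X).  Call an edge of w
   owned by T ⊆ C if the elements of C whose root path crosses it all lie
   in T; circuit minimality says that every nonempty T owns fewer than |T|
   edges.  Cutting at a highest owned edge either removes an edge from all
   root paths of T, or splits T into two parts owning disjoint edge sets;
   induction gives |T| <= (|T| - #owned) * 2^h with h the maximal number of
   owned edges on one root path.  For T = C this reads |C| <= 2^depth. *)

Section AncestorPaths.
Variables (V : finType) (par : V -> V).
Local Notation anc := (anc par).

Lemma mem_anc_iter n v : iter n par v \in anc v.
Proof.
have reach := fconnect_iter par n v.
have le_order : order par v <= #|V| by rewrite /order max_card.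
rewrite inE; apply/existsP; exists (Ordinal (leq_trans (findex_max reach) le_order)).
by rewrite /= iter_findex.
Qed.

Lemma ancP u v : reflect (exists n, iter n par v = u) (u \in anc v).
Proof.
apply: (iffP idP); last by move=> [n <-]; apply: mem_anc_iter.
by rewrite inE => /existsP [n /eqP <-]; exists n.
Qed.

Lemma anc_refl v : v \in anc v.
Proof. exact: (mem_anc_iter 0). Qed.

Lemma anc_trans u v x : u \in anc v -> v \in anc x -> u \in anc x.
Proof. by move=> /ancP [i <-] /ancP [j <-]; apply/ancP; exists (i + j); rewrite iterD. Qed.

Lemma anc_subset v x : v \in anc x -> anc v \subset anc x.
Proof. by move=> vx; apply/subsetP => u /anc_trans; apply. Qed.

Lemma anc_total u v x : u \in anc x -> v \in anc x -> (u \in anc v) || (v \in anc u).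
Proof.
move=> /ancP [i <-] /ancP [j <-]; case: (leqP i j) => [le_ij | /ltnW le_ji].
  by apply/orP; right; apply/ancP; exists (j - i); rewrite -iterD subnK.
by apply/orP; left; apply/ancP; exists (i - j); rewrite -iterD subnK.
Qed.

Lemma anc_leq_card u v x :
  u \in anc x -> v \in anc x -> #|anc u| <= #|anc v| -> u \in anc v.
Proof.
move=> ux vx le_uv; case/orP: (anc_total ux vx) => // vu.
move: le_uv; rewrite (geq_leqif (subset_leqif_card (anc_subset vu))).
by move=> /subsetP; apply; apply: anc_refl.
Qed.

End AncestorPaths.

Section MatroidRank.
Variables (E : finType) (M : matroid E).
Local Notation r := (mrank M).

Lemma mrank_set0 : r set0 = 0.
Proof. by apply/eqP; rewrite -leqn0 -(cards0 E) mrank_card. Qed.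

Lemma mrank_setU1 (e : E) (X : {set E}) : r (e |: X) <= (r X).+1.
Proof.
have := mrank_submod M [set e] X; rewrite -add1n.
have := mrank_card M [set e]; rewrite cards1; lia.
Qed.

Lemma mrank_setU1_lt (e : E) (X S : {set E}) :
  X \subset S -> r S < r (e |: S) -> r X < r (e |: X).
Proof.
move=> sXS lt_S; have := mrank_submod M (e |: X) S.
rewrite -setUA (setUidPr sXS).
have : r X <= r ((e |: X) :&: S) by apply: mrank_mono; rewrite subsetI subsetUr.
by move: lt_S; lia.
Qed.

Lemma circuit_rank_lt (C : {set E}) : circuit M C -> r C < #|C|.
Proof. by case/andP; rewrite ltn_neqAle mrank_card andbT. Qed.

Lemma circuit_proper_rank (C X : {set E}) : circuit M C -> X \proper C -> r X = #|X|.
Proof. by case/andP=> _ /forallP minC XC; apply/eqP; have := minC X; rewrite XC. Qed.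

Lemma circuit_neq0 (C : {set E}) : circuit M C -> C != set0.
Proof.
move/circuit_rank_lt; apply: contraTneq => ->.
by rewrite mrank_set0 cards0.
Qed.

End MatroidRank.

Section Star.
Variables (V : finType) (par : V -> V) (E : finType) (f : E -> V).

(* The vertex set of T^*(f X), root included. *)
Definition star (X : {set E}) : {set V} := \bigcup_(x in X) anc par (f x).

Lemma starP v (X : {set E}) :
  reflect (exists2 x, x \in X & v \in anc par (f x)) (v \in star X).
Proof. exact: bigcupP. Qed.

Lemma starS (X Y : {set E}) : X \subset Y -> star X \subset star Y.
Proof.
by move=> sXY; apply/bigcupsP => x xX; apply: (bigcup_max x); rewrite ?(subsetP sXY).
Qed.

Lemma star_set1 e : star [set e] = anc par (f e).
Proof. by rewrite /star big_set1. Qed.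

Lemma star_setU1 e (X : {set E}) : star (e |: X) = anc par (f e) :|: star X.
Proof. by rewrite /star bigcup_setU big_set1. Qed.

End Star.

Section Carrier.
Variables (E : finType) (M : matroid E) (V : finType) (root : V) (par : V -> V).
Variables (f : E -> V).
Local Notation r := (mrank M).
Local Notation star := (star par f).

(* [w] plays the role of the edge set of a depth-decomposition of the
   restriction of [M] to [S], each edge named by its lower endpoint. *)
Definition carries (S : {set E}) (w : {set V}) : Prop :=
  [/\ root \notin w, #|w| = r S
    & forall X : {set E}, X \subset S -> r X <= #|w :&: star X|].

Lemma carries_setT : depth_decomposition M root par f -> carries setT (setT :\ root).
Proof.
case=> _ rank_tree rank_le_subtree; split.
- by rewrite !inE eqxx.
- by rewrite rank_tree /tree_size -cardsT (cardsD1 root [set: V]) inE add1n subn1.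
move=> X _; apply: leq_trans (rank_le_subtree X) _; apply: subset_leq_card.
apply/subsetP => v; rewrite !inE => /andP [-> /bigcupP [_ /imsetP [x xX ->] vx]].
by apply/starP; exists x.
Qed.

(* Adding [e] raises the rank, so [e] has an edge of [w] on its root path;
   dropping the lowest such edge [u] keeps the bounds, since every other one
   lies above [u]. *)
Lemma carries_rank_jump e (S : {set E}) w :
  carries (e |: S) w -> r (e |: S) = (r S).+1 -> exists w', carries S w'.
Proof.
move=> [root_w card_w rank_le] jump.
have lt_S : r S < r (e |: S) by rewrite jump.
have : 0 < #|w :&: anc par (f e)|.
  have := mrank_setU1_lt (sub0set S) lt_S; rewrite mrank_set0 setU0.
  by move/leq_trans; apply; rewrite -star_set1 rank_le // sub1set setU11.
rewrite card_gt0 => /set0Pn [u0 u0_in].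
case: (arg_maxnP (fun u => #|anc par u|) u0_in) => u /setIP [uw ue] u_lowest.
exists (w :\ u); split.
- by rewrite inE negb_and root_w orbT.
- by have := cardsD1 u w; rewrite uw card_w jump add1n => [[]].
move=> X sXS; case: (boolP (u \in star X)) => uX; last first.
  have -> : (w :\ u) :&: star X = w :&: star X.
    apply/setP => v; rewrite !inE.
    by case: (eqVneq v u) => [-> | //]; rewrite (negbTE uX) !andbF.
  by rewrite rank_le // (subset_trans sXS) ?subsetUr.
have same_star : w :&: star (e |: X) = w :&: star X.
  apply/setP => v; rewrite !inE star_setU1 in_setU.
  case: (boolP (v \in w)) => //= vw; case: (boolP (v \in anc par (f e))) => //= ve.
  have vu : v \in anc par u.
    by apply: (anc_leq_card ve ue); apply: u_lowest; exact/setIP.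
  by case/starP: uX => x xX ux; apply/esym/starP; exists x => //; apply: anc_trans vu ux.
have := rank_le (e |: X) (setUS _ sXS); rewrite same_star.
rewrite (cardsD1 u (w :&: star X)) !inE uw uX setIDAC add1n.
by have := mrank_setU1_lt sXS lt_S; lia.
Qed.

Lemma carries_setU1 e (S : {set E}) w : carries (e |: S) w -> exists w', carries S w'.
Proof.
move=> carr; have [eq_rank | neq_rank] := eqVneq (r S) (r (e |: S)).
  case: carr => root_w card_w rank_le; exists w; split; rewrite ?eq_rank //.
  by move=> X sXS; apply: rank_le; rewrite (subset_trans sXS) ?subsetUr.
apply: carries_rank_jump carr _; have := mrank_setU1 M e S.
have : r S <= r (e |: S) by apply: mrank_mono; rewrite subsetUr.
by move: neq_rank => /eqP; lia.
Qed.

Lemma exists_carrier (S : {set E}) :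
  depth_decomposition M root par f -> exists w, carries S w.
Proof.
move=> dd; move Hn: #|~: S| => n; elim: n S Hn => [|n IH] S.
  move/eqP; rewrite cards_eq0 => /eqP S0; rewrite -[S]setCK S0 setC0.
  by exists (setT :\ root); apply: carries_setT.
move=> cardC; have [e eSC] : exists e, e \in ~: S by apply/set0Pn; rewrite -card_gt0 cardC.
have [w carr] : exists w, carries (e |: S) w.
  apply: IH; have := cardsD1 e (~: S); rewrite eSC cardC add1n => [[->]].
  by rewrite setCU setIC setDE.
exact: carries_setU1 carr.
Qed.

End Carrier.

Section Owned.
Variables (V : finType) (par : V -> V) (E : finType) (f : E -> V) (C : {set E}).
Local Notation anc := (anc par).
Local Notation star := (star par f).
Implicit Types (w : {set V}) (T : {set E}).

Definition below T (v : V) : {set E} := [set y in T | v \in anc (f y)].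

Definition owned w T : {set V} :=
  [set v in w | (below C v != set0) && (below C v \subset T)].

Definition height w T : nat := \max_(x in T) #|owned w T :&: anc (f x)|.

Definition sparse w : Prop :=
  forall T, T \subset C -> T != set0 -> #|owned w T| < #|T|.

Lemma below_subset T v : below T v \subset T.
Proof. by apply/subsetP => y /setIdP []. Qed.

Lemma owned_subset w T : owned w T \subset w.
Proof. by apply/subsetP => v; rewrite inE => /andP []. Qed.

Lemma ownedS w T T' : T \subset T' -> owned w T \subset owned w T'.
Proof.
move=> sTT'; apply/subsetP => v; rewrite !inE => /and3P [-> -> /subset_trans].
exact.
Qed.

Lemma owned_setD1 w u T : owned (w :\ u) T = owned w T :\ u.
Proof. by apply/setP => v; rewrite !inE -!andbA. Qed.

Lemma below_owned_neq0 w T u : u \in owned w T -> below T u != set0.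
Proof.
rewrite inE => /and3P [_ /set0Pn [y y_in] /subsetP below_T].
by apply/set0Pn; exists y; rewrite inE below_T //; case/setIdP: y_in.
Qed.

Lemma sparse_setD1 w u : sparse w -> sparse (w :\ u).
Proof.
move=> sp_w T sTC T0; apply: leq_ltn_trans (sp_w T sTC T0).
by rewrite owned_setD1 subset_leq_card ?subsetDl.
Qed.

Lemma owned_star_disjoint w T : T \subset C -> [disjoint owned w T & star (C :\: T)].
Proof.
move=> sTC; rewrite -setI_eq0; apply/eqP/setP => v; rewrite !inE.
apply/negP => /andP [/and3P [_ _ /subsetP below_T] /starP [y]].
rewrite inE => /andP [yT yC] vy.
by move: yT; rewrite below_T // inE yC.
Qed.

Lemma owned_all w : owned w C = w :&: star C.
Proof.
apply/setP => v; rewrite !inE; case: (v \in w) => //=.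
apply/andP/starP => [[/set0Pn [y]] | [x xC vx]].
  by rewrite inE => /andP [yC vy] _; exists y.
by split; [apply/set0Pn; exists x; rewrite inE xC | apply: below_subset].
Qed.

Lemma card_owned_setU w T1 T2 :
  [disjoint T1 & T2] ->
  (forall v, v \in owned w (T1 :|: T2) -> (below C v \subset T1) || (below C v \subset T2)) ->
  #|owned w (T1 :|: T2)| = #|owned w T1| + #|owned w T2|.
Proof.
move=> disjT sides.
have -> : owned w (T1 :|: T2) = owned w T1 :|: owned w T2.
  apply/eqP; rewrite eqEsubset subUset (ownedS _ (subsetUl T1 T2)).
  rewrite (ownedS _ (subsetUr T1 T2)) !andbT.
  apply/subsetP => v v_in; have := sides v v_in.
  by move: v_in; rewrite !inE => /and3P [-> -> _].
rewrite cardsU; suff -> : owned w T1 :&: owned w T2 = set0 by rewrite cards0 subn0.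
apply/setP => v; rewrite !inE; apply/negP => /andP [/and3P [_ below0 sub1]].
move=> /and3P [_ _ sub2]; case/set0Pn: below0 => y yv.
by move: disjT; rewrite disjoint_subset => /subsetP /(_ y (subsetP sub1 y yv));
  rewrite inE (subsetP sub2 y yv).
Qed.

Lemma below_split_highest w T u v :
  u \in owned w T -> (forall v, v \in owned w T -> #|anc u| <= #|anc v|) ->
  v \in owned w T ->
  (below C v \subset below T u) || (below C v \subset T :\: below T u).
Proof.
move=> u_own u_highest v_own; have := v_own; rewrite inE => /and3P [_ _ below_T].
case: (boolP [exists y in below C v, u \in anc (f y)]) => [/exists_inP [y] | none].
  rewrite inE => /andP [_ vy] uy; have uv := anc_leq_card uy vy (u_highest v v_own).
  apply/orP; left; apply/subsetP => z z_in; have /setIdP [_ vz] := z_in.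
  by rewrite inE (subsetP below_T z z_in) (anc_trans uv vz).
apply/orP; right; apply/subsetP => z z_in.
rewrite in_setD inE (subsetP below_T z z_in) !andbT.
by apply: contra none => uz; apply/exists_inP; exists z.
Qed.

Lemma card_owned_split_highest w T u :
  u \in owned w T -> (forall v, v \in owned w T -> #|anc u| <= #|anc v|) ->
  #|owned w T| = #|owned w (below T u)| + #|owned w (T :\: below T u)|.
Proof.
move=> u_own u_highest.
have defT : below T u :|: (T :\: below T u) = T.
  by rewrite -[RHS](setID T (below T u)) (setIidPr (below_subset T u)).
have disjT : [disjoint below T u & T :\: below T u].
  by rewrite disjoints_subset; apply/subsetP => x x_in; rewrite in_setC in_setD x_in.
rewrite -{1}defT card_owned_setU // defT => v.
exact: below_split_highest u_own u_highest.
Qed.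

Lemma height_le_depth (root : V) w T : root \notin w -> height w T <= tree_depth root par.
Proof.
move=> root_w; apply/bigmax_leqP => x _; apply: leq_trans (leq_bigmax (f x)).
apply/subset_leq_card/subsetP => v /setIP [v_own vx]; rewrite in_setD1 vx andbT.
by apply: contraNneq root_w => <-; apply: (subsetP (owned_subset w T)).
Qed.

Lemma leq_height w T x : x \in T -> #|owned w T :&: anc (f x)| <= height w T.
Proof. by move=> xT; rewrite /height (bigD1 x) //= leq_maxl. Qed.

Lemma heightS w T0 T : T0 \subset T -> height w T0 <= height w T.
Proof.
move=> sT0T; apply/bigmax_leqP => x xT0.
apply: leq_trans (leq_height _ (subsetP sT0T x xT0)).
by apply/subset_leq_card/setSI/ownedS.
Qed.

Lemma height_setD1 w u T :
  u \in owned w T -> below T u = T -> height (w :\ u) T < height w T.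
Proof.
move=> u_own below_all; have u_on x : x \in T -> u \in anc (f x).
  by rewrite -below_all => /setIdP [].
have [x0 x0T] := set0Pn _ (below_owned_neq0 u_own); rewrite below_all in x0T.
have h_pos : 0 < height w T.
  apply: leq_trans (leq_height _ x0T); rewrite card_gt0.
  by apply/set0Pn; exists u; rewrite inE u_own u_on.
rewrite -(prednK h_pos) ltnS; apply/bigmax_leqP => x xT.
have := leq_height w xT; rewrite owned_setD1 setIDAC.
by rewrite (cardsD1 u (owned w T :&: _)) inE u_own u_on // add1n -(prednK h_pos).
Qed.

Lemma card_le_deficiency_height w T :
  sparse w -> T \subset C -> T != set0 ->
  #|T| <= (#|T| - #|owned w T|) * 2 ^ height w T.
Proof.
move=> sp_w; have [n size_lt] := ubnP (#|owned w T| + #|T|).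
elim: n w T sp_w size_lt => // n IH w T sp_w size_lt sTC T0.
have lt_own := sp_w T sTC T0.
have [own0 | [u0 u0_own]] := set_0Vmem (owned w T).
  by rewrite own0 cards0 subn0 leq_pmulr // expn_gt0.
case: (arg_minnP (fun u => #|anc u|) u0_own) => u u_own u_highest.
have {}u_own : u \in owned w T := u_own.
have [below_all | below_part] := eqVneq (below T u) T.
  have card_own := cardsD1 u (owned w T); rewrite u_own add1n in card_own.
  have := IH (w :\ u) T (sparse_setD1 u sp_w); rewrite owned_setD1.
  have /(leq_pexp2l (isT : 0 < 2)) := height_setD1 u_own below_all; rewrite expnS.
  move: (2 ^ _) (2 ^ _) => p' p le_pow; move: size_lt lt_own card_own le_pow.
  by move: (#|T|) (#|owned w T|) (#|owned w T :\ u|); nia.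
set Tu := below T u; set T' := T :\: Tu.
have sTuT : Tu \subset T := below_subset T u.
have sT'T : T' \subset T := subsetDl T Tu.
have Tu0 : Tu != set0 := below_owned_neq0 u_own.
have T'0 : T' != set0.
  have : Tu \proper T by rewrite properEneq below_part sTuT.
  by case/properP => _ [x xT xTu]; apply/set0Pn; exists x; rewrite inE xTu.
have card_T := cardsID Tu T; rewrite (setIidPr sTuT) in card_T.
have card_own := card_owned_split_highest u_own u_highest.
have lt_Tu := sp_w Tu (subset_trans sTuT sTC) Tu0.
have lt_T' := sp_w T' (subset_trans sT'T sTC) T'0.
have := IH w Tu sp_w _ (subset_trans sTuT sTC) Tu0.
have := IH w T' sp_w _ (subset_trans sT'T sTC) T'0.
have := leq_pexp2l (isT : 0 < 2) (heightS w sTuT).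
have := leq_pexp2l (isT : 0 < 2) (heightS w sT'T).
move: (2 ^ height w Tu) (2 ^ height w T') (2 ^ height w T) => pu p' p.
rewrite -card_gt0 in Tu0; rewrite -card_gt0 in T'0.
move: size_lt card_T card_own lt_Tu lt_T' Tu0 T'0.
move: #|T| #|Tu| #|T'| #|owned w T| #|owned w Tu| #|owned w T'|; nia.
Qed.

End Owned.

Section CircuitCarrier.
Variables (E : finType) (M : matroid E) (V : finType) (root : V) (par : V -> V).
Variables (f : E -> V) (C : {set E}) (w : {set V}).
Hypotheses (circC : circuit M C) (carrC : carries M root par f C w).
Local Notation owned := (owned par f C w).

(* [w] has only [r C] < |C| edges, while [C :\: T] is independent and so
   needs [|C| - |T|] edges of [w] off the ones owned by [T]. *)
Lemma carrier_sparse : sparse par f C w.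
Proof.
case: carrC => _ card_w rank_le T sTC T0.
have proper_CT : C :\: T \proper C.
  case/set0Pn: T0 => x xT; apply/properP; split; first exact: subsetDl.
  by exists x; [apply: (subsetP sTC) | rewrite inE xT].
have := rank_le _ (subsetDl C T); rewrite (circuit_proper_rank circC proper_CT).
have disj := disjointWr (subsetIr w _) (owned_star_disjoint par f w sTC).
have : #|owned T :|: w :&: star par f (C :\: T)| <= #|w|.
  by apply: subset_leq_card; rewrite subUset owned_subset subsetIl.
rewrite cardsU (disjoint_setI0 disj) cards0 subn0.
have := cardsID T C; rewrite (setIidPr sTC).
by have := circuit_rank_lt circC; lia.
Qed.

Lemma carrier_owned_all : (#|C|).-1 <= #|owned C|.
Proof.
case: carrC => _ _ rank_le; have [y yC] := set0Pn _ (circuit_neq0 circC).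
have := rank_le _ (subsetDl C [set y]).
rewrite (circuit_proper_rank circC (properD1 yC)) (cardsD1 y C) yC add1n /=.
move/leq_trans; apply; rewrite owned_all; apply/subset_leq_card/setIS/starS.
exact: subsetDl.
Qed.

End CircuitCarrier.

Theorem proposition3p4 (E : finType) (M : matroid E)
    (V : finType) (root : V) (par : V -> V) (f : E -> V) :
  depth_decomposition M root par f ->
  max_circuit_size M <= 2 ^ tree_depth root par.
Proof.
move=> dd; apply/bigmax_leqP => C circC.
have [w carrC] := exists_carrier C dd.
have sparse_w := carrier_sparse circC carrC.
have C0 := circuit_neq0 circC.
have deficiency1 : #|C| - #|owned par f C w C| = 1.
  have := sparse_w C (subxx C) C0; have := carrier_owned_all circC carrC; lia.
have := card_le_deficiency_height sparse_w (subxx C) C0; rewrite deficiency1 mul1n.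
move/leq_trans; apply; rewrite leq_pexp2l //; apply: height_le_depth.
by case: carrC.
Qed.
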